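(* Let $\theta>1$ and $r\in(\theta^{-1},\theta^{-1/2}]$. Let $\mathsf{A}$ be any deterministic online algorithm for one-max search with predictions having robustness $r$ and consistency $\frac1{r\theta}$. Suppose there is $u\in\mathbb{R}$ such that for all $n\ge1$, all $p\in[1,\theta]^n$ with maximum $p^*$ and all $y\in[1,\theta]$, \[ \frac{\mathsf{A}(p,y)}{p^*}\ge\max\Big(r,\ \frac{1}{r\theta}\,\mathcal{E}(p^*,y)^{u}\Big). \] Then $u\ge \frac{\ln\theta}{\ln(r\theta)}-2$.
   Context: One-max search: fix $\theta>1$. An instance is a sequence of prices $p=(p_1,\dots,p_n)\in[1,\theta]^n$, revealed one at a time; the algorithm receives at the start a prediction $y\in[1,\theta]$ of $p^*:=\max_ip_i$. At each step it irrevocably accepts the current price (payoff = that price) or rejects it; if nothing is accepted by step $n$ the payoff is $1$. $\mathsf{A}(p,y)$ is the payoff. Consistency: $\inf_p \mathsf{A}(p,p^* )/p^*$; robustness: $\inf_{p,y}\mathsf{A}(p,y)/p^*$. The multiplicative error is $\mathcal{E}(p^*,y)=\min\{p^*/y,\,y/p^*\}$. *)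

From mathcomp Require Import all_boot all_order all_algebra.
From mathcomp Require Import all_classical all_reals all_analysis.
Set Implicit Arguments. Unset Strict Implicit. Unset Printing Implicit Defensive.
Import Order.TTheory GRing.Theory Num.Theory.
Local Open Scope ring_scope.
Local Open Scope classical_set_scope.

Section OneMax.
Variable R : realType.

(* A deterministic online algorithm: given the prediction y and the prefix
   (p_1, ..., p_i) of prices revealed so far (the last one being the current
   price), it decides (true = accept) whether to accept the current price p_i. *)
Definition algorithm := R -> seq R -> bool.

(* Run the decision rule [acc] on the remaining prices [p], [hist] being the
   prices already revealed (and rejected). Payoff 1 if nothing is accepted. *)
Fixpoint run (acc : seq R -> bool) (hist : seq R) (p : seq R) : R :=
  match p with
  | [::] => 1
  | x :: q => if acc (rcons hist x) then x else run acc (rcons hist x) q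
  end.

Definition payoff (A : algorithm) (p : seq R) (y : R) : R := run (A y) [::] p.

Definition instance (theta : R) (p : seq R) : Prop :=
  (0 < size p)%N /\ all (fun x => 1 <= x <= theta) p.

(* p^* = max_i p_i  (all prices are >= 1 and p is nonempty, so this is the max) *)
Definition pmax (p : seq R) : R := \big[Num.max/1]_(x <- p) x.

Definition mult_err (ps y : R) : R := Num.min (ps / y) (y / ps).

Definition robustness (theta : R) (A : algorithm) : R :=
  inf [set z | exists p y, instance theta p /\ 1 <= y <= theta /\
                           z = payoff A p y / pmax p].

Definition consistency (theta : R) (A : algorithm) : R :=
  inf [set z | exists p, instance theta p /\ z = payoff A p (pmax p) / pmax p].

End OneMax.

From mathcomp Require Import all_boot all_order all_algebra.
From mathcomp Require Import all_classical all_reals all_analysis.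
From mathcomp Require Import lra.

Set Implicit Arguments.
Unset Strict Implicit.
Unset Printing Implicit Defensive.
Import Order.TTheory GRing.Theory Num.Theory.
Local Open Scope ring_scope.

(* Show the algorithm, with prediction theta, a first price x in [1, 1/r).
   Accepting it is ruled out by the instance [x; theta], whose maximum theta
   is predicted exactly: the guarantee at error 1 would force x >= 1/r.
   Rejecting it on the instance [x] earns 1, so the error-dependent guarantee
   forces x^(1+u) <= r theta^(1+u).  In logarithms this is a linear
   inequality in ln x on [0, -ln r); it persists at the endpoint x = 1/r,
   where it reads (2 + u) ln (r theta) >= ln theta. *)

Lemma linear_le_at_right_end (R : realType) (c k lo hi : R) : lo < hi ->
  (forall s, lo <= s < hi -> c * s <= k) -> c * hi <= k.
Proof.
move=> lo_lt_hi bound.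
have [c_le0 | c_gt0] := leP c 0.
  apply: le_trans (bound lo _); last by rewrite lexx lo_lt_hi.
  exact: ler_wnM2l (ltW lo_lt_hi).
rewrite -ler_pdivlMl // -(@sup_itv _ (BLeft lo) true hi) ?bnd_simp //.
apply: ge_sup; first by exists lo; rewrite /= in_itv /= lexx.
by move=> s /=; rewrite in_itv /= ler_pdivlMl // => /bound.
Qed.

Section TwoPriceAdversary.
Variables (R : realType) (theta r u : R) (A : algorithm R).
Hypothesis theta_gt1 : 1 < theta.
Hypothesis guarantee : forall (p : seq R) (y : R),
  instance theta p -> 1 <= y <= theta ->
  Num.max r ((r * theta)^-1 * (mult_err (pmax p) y) `^ u)
    <= payoff A p y / pmax p.

Let theta_gt0 : 0 < theta. Proof. exact: lt_trans theta_gt1. Qed.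
Let theta_itv : 1 <= theta <= theta. Proof. by rewrite (ltW theta_gt1) lexx. Qed.

Lemma accept_first_price x : 1 <= x <= theta -> A theta [:: x] ->
  (r * theta)^-1 <= x / theta.
Proof.
move=> /andP[x_ge1 x_le] acc.
have inst : instance theta [:: x; theta].
  by split => //=; rewrite x_ge1 x_le theta_itv.
have := guarantee inst theta_itv.
rewrite /payoff /= acc /pmax !big_cons big_nil (max_l (ltW theta_gt1)) (max_r x_le).
rewrite /mult_err divff ?gt_eqF // minxx powR1 mulr1.
by rewrite ge_max => /andP[].
Qed.

Lemma reject_first_price x : 1 <= x <= theta -> ~~ A theta [:: x] ->
  (r * theta)^-1 * (x / theta) `^ u <= x^-1.
Proof.
move=> /andP[x_ge1 x_le] /negbTE rej.
have inst : instance theta [:: x] by split => //=; rewrite x_ge1 x_le.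
have := guarantee inst theta_itv.
rewrite /payoff /= rej /pmax big_cons big_nil (max_l x_ge1) div1r.
have x_gt0 : 0 < x by apply: lt_le_trans x_ge1.
rewrite /mult_err min_l; first by rewrite ge_max => /andP[].
by rewrite ler_pdivrMr // mulrAC ler_pdivlMr //; apply: ler_pM => //; exact: ltW.
Qed.

Hypothesis r_gt : theta^-1 < r.

Let r_gt0 : 0 < r. Proof. by apply: lt_trans r_gt; rewrite invr_gt0. Qed.

Lemma reject_below_inv x : 1 <= x < r^-1 ->
  (r * theta)^-1 * (x / theta) `^ u <= x^-1.
Proof.
move=> /andP[x_ge1 x_lt].
have x_itv : 1 <= x <= theta.
  by rewrite x_ge1 (le_trans (ltW x_lt)) // -(invrK theta) lef_pV2 ?posrE ?invr_gt0 ?ltW.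
have [acc | rej] := boolP (A theta [:: x]); last exact: reject_first_price.
have := accept_first_price x_itv acc.
by rewrite invfM ler_pM2r ?invr_gt0 // leNgt x_lt.
Qed.

Lemma log_reject_below_inv s : 0 <= s < - ln r ->
  (1 + u) * s <= ln (r * theta) + u * ln theta.
Proof.
move=> /andP[s_ge0 s_lt].
have x_itv : 1 <= expR s < r^-1.
  by rewrite -expR0 ler_expR s_ge0 -[r]lnK ?posrE // -expRN ltr_expR.
have rt_gt0 : 0 < r * theta by rewrite mulr_gt0.
have ratio_gt0 : 0 < expR s / theta by rewrite divr_gt0 ?expR_gt0.
have lnE : ln ((r * theta)^-1 * (expR s / theta) `^ u)
    = - ln (r * theta) + u * (s - ln theta).
  rewrite [LHS]lnM ?posrE ?invr_gt0 ?powR_gt0 // (lnV (x := r * theta)) //.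
  by rewrite ln_powR ln_div ?posrE ?expR_gt0 // expRK.
have := reject_below_inv x_itv.
rewrite -ler_ln ?posrE ?mulr_gt0 ?invr_gt0 ?powR_gt0 ?expR_gt0 //.
rewrite lnE lnV ?posrE ?expR_gt0 // expRK.
lra.
Qed.
End TwoPriceAdversary.

Theorem theorem3 (R : realType) (theta r u : R) (A : algorithm R) :
  1 < theta ->
  theta^-1 < r -> r <= theta `^ (- 2^-1) ->
  robustness theta A = r ->
  consistency theta A = (r * theta)^-1 ->
  (forall (p : seq R) (y : R), instance theta p -> 1 <= y <= theta ->
     Num.max r ((r * theta)^-1 * (mult_err (pmax p) y) `^ u)
       <= payoff A p y / pmax p) ->
  ln theta / ln (r * theta) - 2 <= u.
Proof.
move=> theta_gt1 r_gt r_le _ _ guarantee.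
have theta_gt0 : 0 < theta by apply: lt_trans theta_gt1.
have r_gt0 : 0 < r by apply: lt_trans r_gt; rewrite invr_gt0.
have ln_theta_gt0 : 0 < ln theta by apply: ln_gt0.
have ln_r_lt0 : ln r < 0.
  rewrite (le_lt_trans (y := ln (theta `^ (- 2^-1)))) //.
    by rewrite ler_ln ?posrE ?powR_gt0.
  by rewrite ln_powR mulNr oppr_lt0 mulr_gt0.
have ln_rtheta : ln (r * theta) = ln r + ln theta by rewrite lnM ?posrE.
have ln_rtheta_gt0 : 0 < ln (r * theta).
  by apply: ln_gt0; rewrite -(mulVf (lt0r_neq0 theta_gt0)) ltr_pM2r.
have := linear_le_at_right_end _ (log_reject_below_inv theta_gt1 guarantee r_gt).
rewrite oppr_gt0 => /(_ ln_r_lt0).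
rewrite ln_rtheta in ln_rtheta_gt0 *; rewrite lerBlDr ler_pdivrMr //.
lra.
Qed.
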